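(* For every $N\ge 2$ and every $x\in\{0,1,\dots,N-2\}$, $$|2p(x)-1|\le\frac{1}{(N-x-2)!}.$$
   Context: For $\sigma\in\mathcal{S}_N$, $\eta_1(\sigma)$ is the number of fixed points and $\eta_2(\sigma)$ the number of 2-cycles of $\sigma$; $\nu$ is the uniform measure on $\mathcal{S}_N$, and for $x\in\{0,\dots,N\}\setminus\{N-1\}$, $p(x)=\mathbb{E}_\nu[\eta_2\mid\eta_1=x]$. *)

From mathcomp Require Import all_boot all_order all_algebra all_fingroup.
Set Implicit Arguments. Unset Strict Implicit. Unset Printing Implicit Defensive.
Import GRing.Theory Num.Theory.
Local Open Scope ring_scope.

Definition eta1 (N : nat) (s : 'S_N) : nat := #|[set i | s i == i]|.

Definition eta2 (N : nat) (s : 'S_N) : nat :=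
  #|[set C in porbits s | #|C| == 2%N]|.

(* p(x) = E_nu[eta2 | eta1 = x] for nu uniform on S_N:
   the uniform normalisation cancels, leaving the average of eta2 over
   the permutations with exactly x fixed points. *)
Definition p (N x : nat) : rat :=
  (\sum_(s : 'S_N | eta1 s == x) (eta2 s)%:R) /
  (#|[set s : 'S_N | eta1 s == x]|)%:R.

From mathcomp Require Import all_boot all_order all_algebra all_fingroup.
From mathcomp Require Import ring lra zify.
Import Order.TTheory GRing.Theory Num.Theory.

(* Proof of Proposition 4.1.  Let R(n, x) be the number of permutations of n
   points with exactly x fixed points (the rencontres numbers) and S(n, x) the
   total number of 2-cycles of these permutations, so that p N x = S / R.
   Two double countings give
     (x + 1) R(n + 1, x + 1) = (n + 1) R(n, x)     (pairs s, fixed point of s),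
     2 S(n + 2, x) = (n + 2)(n + 1) R(n, x)        (pairs s, point of a 2-cycle).
   The first gives R(k + x, x) = C(k + x, x) D_k, with D_k = R(k, 0) the number
   of derangements; summing over x, sum_k C(n, k) D_(n - k) = n!, and since a
   binomial transform is injective, D is the sequence [subfact] defined by
   D_0 = 1, D_(m+1) = (m + 1) D_m + (-1)^(m+1).  Writing N = k + x + 2,
     2 p N x - 1 = ((k + 2)(k + 1) D_k - D_(k+2)) / D_(k+2)
                 = (-1)^k (k + 1) / D_(k+2),
   and the bound D_(k+2) >= (k + 1)! yields |2 p N x - 1| <= 1 / k!. *)

Lemma card_set_nat_sum (T : finType) (P : pred T) :
  #|[set s : T | P s]| = \sum_(s : T) (P s : nat).
Proof.
rewrite cardsE -sum1_card big_mkcond /=; apply: eq_bigr => s _.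
by rewrite unfold_in; case: (P s).
Qed.

(* The permutations of 'I_n.+1 fixing i are exactly the [lift_perm i i s],
   s a permutation of 'I_n, so sums over them reindex to sums over 'S_n. *)
Lemma sum_perm_fixing (n : nat) (i : 'I_n.+1) (G : 'S_n.+1 -> nat) :
  \sum_(s : 'S_n.+1 | s i == i) G s = \sum_(s : 'S_n) G (lift_perm i i s).
Proof.
rewrite (reindex (lift_perm i i)); last first.
  pose restr j (s : 'S_n.+1) k := odflt k (unlift (s j) (s (lift j k))).
  have restrK j (s : 'S_n.+1) k : lift (s j) (restr j s k) = s (lift j k).
    rewrite /restr; have:= neq_lift j k.
    by rewrite -(can_eq (permK s)) => /unlift_some[] ? ? ->.
  have restr_inj s : injective (restr i s).
    apply: can_inj (restr (s i) s^-1%g) _ => k.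
    by rewrite {1}/restr restrK !permK liftK.
  exists (fun s => perm (restr_inj s)) => [s _ | s].
    by apply/permP=> k; rewrite permE /restr lift_perm_lift lift_perm_id liftK.
  rewrite inE => /eqP si; apply/permP=> k.
  case: (unliftP i k) => [k'|] ->; rewrite ?lift_perm_id ?si //.
  by rewrite lift_perm_lift permE -{1}si restrK.
by apply: eq_bigl => s; rewrite lift_perm_id eqxx.
Qed.

Lemma eta1E (N : nat) (s : 'S_N) : eta1 s = \sum_(k : 'I_N) (s k == k : nat).
Proof. by rewrite /eta1 card_set_nat_sum. Qed.

Lemma eta1_lift_perm (n : nat) (i : 'I_n.+1) (s : 'S_n) :
  eta1 (lift_perm i i s) = (eta1 s).+1.
Proof.
rewrite !eta1E (bigD1_ord i) //= lift_perm_id eqxx add1n; congr _.+1.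
by apply: eq_bigr => k _; rewrite lift_perm_lift (inj_eq (@lift_inj _ i)).
Qed.

Definition rencontres (N x : nat) : nat := #|[set s : 'S_N | eta1 s == x]|.

Lemma rencontresE (N x : nat) :
  rencontres N x = \sum_(s : 'S_N) (eta1 s == x : nat).
Proof. by rewrite /rencontres card_set_nat_sum. Qed.

(* Count the pairs (s, i) with s i = i and x + 1 fixed points in two ways. *)
Lemma rencontres_rec (n x : nat) :
  x.+1 * rencontres n.+1 x.+1 = n.+1 * rencontres n x.
Proof.
have -> : x.+1 * rencontres n.+1 x.+1 =
          \sum_(s : 'S_n.+1) (eta1 s == x.+1) * eta1 s.
  rewrite rencontresE big_distrr /=; apply: eq_bigr => s _.
  by case: eqP => [->|]; rewrite ?muln1 ?muln0 ?mul0n ?mul1n.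
under eq_bigr do rewrite eta1E big_distrr /=.
rewrite exchange_big /= -[n.+1 in RHS]card_ord -sum_nat_const.
apply: eq_bigr => i _.
rewrite (bigID (fun s : 'S_n.+1 => s i == i)) /= [X in _ + X]big1; last first.
  by move=> s /negbTE ->; rewrite muln0.
rewrite addn0 sum_perm_fixing rencontresE; apply: eq_bigr => s _.
by rewrite lift_perm_id eqxx -eta1E eta1_lift_perm eqSS muln1.
Qed.

(* A permutation with x fixed points is a choice of the x fixed points
   together with a derangement of the remaining m points. *)
Lemma rencontres_derangements (m x : nat) :
  rencontres (m + x) x = 'C(m + x, x) * rencontres m 0.
Proof.
elim: x => [|x IH]; first by rewrite addn0 bin0 mul1n.
apply/eqP; rewrite -(eqn_pmul2l (ltn0Sn x)) addnS rencontres_rec IH mulnA.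
by rewrite mulnA -mul_bin_diag.
Qed.

(* Every permutation has between 0 and N fixed points. *)
Lemma sum_rencontres (N : nat) : \sum_(x < N.+1) rencontres N x = N`!.
Proof.
under eq_bigr do rewrite rencontresE.
rewrite -card_Sn -sum1_card exchange_big /=; apply: eq_bigr => s _.
have eta1_le : eta1 s < N.+1.
  by rewrite ltnS /eta1 -[X in _ <= X]card_ord max_card.
rewrite (bigD1 (Ordinal eta1_le)) //= eqxx big1 // => y ney.
by case: eqP => // ey; case/eqP: ney; apply: val_inj.
Qed.

Lemma porbit_card2 (T : finType) (s : {perm T}) (i : T) :
  (#|porbit s i| == 2) = (s i != i) && (s (s i) == i).
Proof.
apply/idP/andP => [/eqP c2 | [nsi ssi]].
  have := uniq_traject_porbit s i; rewrite c2 /= inE andbT => ne.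
  have := iter_porbit s i; rewrite c2 /= => ->.
  by rewrite eq_sym ne eqxx.
suff -> : porbit s i = [set i; s i] by rewrite cards2 (eq_sym i) nsi.
apply/setP => y; apply/porbitP/idP => [[k ->] | ].
  rewrite permX; elim: k => [|k IH] /=; first by rewrite !inE eqxx.
  move: IH; rewrite !inE => /orP[] /eqP ->; first by rewrite eqxx orbT.
  by rewrite (eqP ssi) eqxx.
rewrite !inE => /orP[] /eqP ->; first by exists 0; rewrite expg0 perm1.
by exists 1; rewrite expg1.
Qed.

Lemma double_eta2 (N : nat) (s : 'S_N) :
  2 * eta2 s = \sum_(i : 'I_N) ((s i != i) && (s (s i) == i) : nat).
Proof.
rewrite -card_set_nat_sum.
under eq_finset do rewrite -porbit_card2.
rewrite /eta2 mulnC; symmetry.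
apply: card_uniform_partition; first by move=> C; rewrite inE => /andP[_ /eqP].
apply/and3P; split.
- apply/eqP/setP => y; rewrite inE; apply/bigcupP/idP.
    move=> [C]; rewrite inE => /andP[/imsetP[a _ ->] c2] ya.
    by rewrite -eq_porbit_mem in ya; rewrite (eqP ya).
  move=> y2; exists (porbit s y); last exact: porbit_id.
  by rewrite inE y2 andbT imset_f.
- apply/trivIsetP => A B; rewrite !inE.
  move=> /andP[/imsetP[a _ ->] _] /andP[/imsetP[b _ ->] _].
  apply: contraR; rewrite -setI_eq0 => /set0Pn[y /setIP[ya yb]].
  rewrite -eq_porbit_mem in ya; rewrite -eq_porbit_mem in yb.
  by rewrite -(eqP ya) -(eqP yb).
- by rewrite inE cards0 andbF.
Qed.

Lemma sum_eq_indicator (N : nat) (i : 'I_N) : \sum_(k : 'I_N) (k == i : nat) = 1.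
Proof. by rewrite (bigD1 i) //= eqxx big1 // => k /negbTE ->. Qed.

Lemma eta1_mul_tperm (N : nat) (u : 'S_N) (i j : 'I_N) :
  i != j -> u i = i -> u j = j -> eta1 u = (eta1 (u * tperm i j)%g).+2.
Proof.
move=> nij ui uj; rewrite !eta1E.
have -> : \sum_k (u k == k : nat) = \sum_k
    (((u * tperm i j)%g k == k : nat) + (k == i : nat) + (k == j : nat)).
  apply: eq_bigr => k _; rewrite permM.
  have [->|nki] := eqVneq k i.
    by rewrite ui tpermL eqxx (negbTE nij) eq_sym (negbTE nij).
  have [->|nkj] := eqVneq k j; first by rewrite uj tpermR eqxx (negbTE nij).
  have nui : u k != i by rewrite -{1}ui (inj_eq perm_inj).
  have nuj : u k != j by rewrite -{1}uj (inj_eq perm_inj).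
  by rewrite tpermD // 1?eq_sym // !addn0.
by rewrite !big_split /= !sum_eq_indicator !addn1.
Qed.

(* The permutations of n + 2 points with x fixed points swapping two given
   points i != j are the products t * u, t = (i j), with u fixing i and j and
   having x + 2 fixed points: there are R(n, x) of them. *)
Lemma card_swapping_perms (n x : nat) (i j : 'I_n.+2) : i != j ->
  \sum_(s : 'S_n.+2) ((s i == j) && (s j == i) && (eta1 s == x) : nat)
  = rencontres n x.
Proof.
move=> nij; rewrite (reindex_inj (mulIg (tperm i j))) /=.
have -> : \sum_(u : 'S_n.+2) (((u * tperm i j)%g i == j)
      && ((u * tperm i j)%g j == i) && (eta1 (u * tperm i j)%g == x) : nat)
    = \sum_(u : 'S_n.+2) ((u i == i) * ((u j == j) && (eta1 u == x.+2))).
  apply: eq_bigr => u _; rewrite !permM.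
  rewrite !(can2_eq (tpermK i j) (tpermK i j)) tpermR tpermL.
  have [ui|] := eqVneq (u i) i; last by rewrite /= mul0n.
  have [uj|] := eqVneq (u j) j; last by rewrite /= muln0.
  by rewrite (@eta1_mul_tperm _ u i j nij ui uj) eqSS /= mul1n.
rewrite (bigID (fun u : 'S_n.+2 => u i == i)) /= [X in _ + X]big1; last first.
  by move=> u /negbTE ->.
rewrite addn0 sum_perm_fixing.
case: (unliftP i j) => [j' ->|eji]; last by rewrite eji eqxx in nij.
under eq_bigr do rewrite lift_perm_id eqxx lift_perm_lift
  (inj_eq (@lift_inj _ i)) eta1_lift_perm eqSS mul1n.
rewrite (bigID (fun u : 'S_n.+1 => u j' == j')) /= [X in _ + X]big1; last first.
  by move=> u /negbTE ->.
rewrite addn0 sum_perm_fixing rencontresE; apply: eq_bigr => s _.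
by rewrite lift_perm_id eqxx eta1_lift_perm eqSS.
Qed.

(* Count the pairs (s, i), i in a 2-cycle of s, by the ordered pair (i, s i). *)
Lemma double_sum_eta2 (n x : nat) :
  2 * \sum_(s : 'S_n.+2 | eta1 s == x) eta2 s = n.+2 * (n.+1 * rencontres n x).
Proof.
rewrite big_distrr /= big_mkcond /=.
have -> : \sum_(s : 'S_n.+2) (if eta1 s == x then 2 * eta2 s else 0) =
    \sum_(s : 'S_n.+2) \sum_(i : 'I_n.+2) \sum_(j : 'I_n.+2 | j != i)
      ((s i == j) && (s j == i) && (eta1 s == x) : nat).
  apply: eq_bigr => s _; case: eqP => _; last first.
    by rewrite big1 // => i _; rewrite big1 // => j _; rewrite andbF.
  rewrite double_eta2; apply: eq_bigr => i _.
  have [sii|nsi] := eqVneq (s i) i.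
    by rewrite /= big1 // => j nji; rewrite sii eq_sym (negbTE nji).
  rewrite (bigD1 (s i)) //= eqxx andbT big1 ?addn0 //.
  by move=> j /andP[_ nj]; rewrite eq_sym (negbTE nj).
rewrite exchange_big /= -[n.+2 in RHS]card_ord -sum_nat_const.
apply: eq_bigr => i _; rewrite exchange_big /=.
rewrite (eq_bigr (fun _ => rencontres n x)); last first.
  by move=> j nji; rewrite card_swapping_perms // eq_sym.
by rewrite sum_nat_const cardC1 card_ord.
Qed.

Local Open Scope ring_scope.

(* A sequence whose binomial transform vanishes is zero: the k = 0 term of
   sum_k C(n, k) f(n - k) is f(n), the others vanish by strong induction. *)
Lemma binomial_transform_eq0 (R : pzRingType) (f : nat -> R) :
  (forall n, \sum_(k < n.+1) 'C(n, k)%:R * f (n - k)%N = 0) -> forall m, f m = 0.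
Proof.
move=> transf0; elim/ltn_ind=> m IH.
have := transf0 m; rewrite big_ord_recl bin0 mul1r subn0 big1 ?addr0 // => k _.
by rewrite IH ?mulr0 //= /bump /=; have := ltn_ord k; lia.
Qed.

Fixpoint subfact (m : nat) : rat :=
  if m is k.+1 then k.+1%:R * subfact k + (-1) ^+ k.+1 else 1.

(* sum_(k <= n+1) C(n+1, k) (-1)^(n+1-k) = (1 - 1)^(n+1) = 0. *)
Lemma alternating_binomial_sum (n : nat) :
  \sum_(k < n.+1) 'C(n.+1, k)%:R * (-1) ^+ (n.+1 - k) + 1 = 0 :> rat.
Proof.
have := exprDn (-1 : rat) 1 n.+1.
rewrite addNr expr0n /= big_ord_recr /= subnn expr0 expr1n mul1r binn => /esym.
apply: etrans; congr (_ + _); apply: eq_bigr => k _.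
by rewrite expr1n mulr1 mulr_natl.
Qed.

Lemma binomial_transform_subfact (n : nat) :
  \sum_(k < n.+1) 'C(n, k)%:R * subfact (n - k) = n`!%:R.
Proof.
elim: n => [|n IH]; first by rewrite big_ord1 /= bin0 mul1r.
rewrite big_ord_recr /= subnn binn mul1r.
have -> : \sum_(k < n.+1) 'C(n.+1, k)%:R * subfact (n.+1 - k) =
    n.+1%:R * \sum_(k < n.+1) 'C(n, k)%:R * subfact (n - k) +
    \sum_(k < n.+1) 'C(n.+1, k)%:R * (-1) ^+ (n.+1 - k).
  rewrite mulr_sumr -big_split /=; apply: eq_bigr => k _.
  have kn : (k <= n)%N by rewrite -ltnS.
  have binS : ('C(n.+1, k) * (n - k).+1 = n.+1 * 'C(n, k))%N.
    by rewrite mulnC -subSn // -mul_bin_down.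
  rewrite subSn //= mulrDr mulrA -natrM binS natrM; ring.
by rewrite IH -addrA alternating_binomial_sum addr0 -natrM factS.
Qed.

Lemma binomial_transform_derangements (n : nat) :
  \sum_(k < n.+1) 'C(n, k)%:R * (rencontres (n - k) 0)%:R = n`!%:R :> rat.
Proof.
rewrite -sum_rencontres natr_sum; apply: eq_bigr => k _.
have kn : (k <= n)%N by rewrite -ltnS.
by have := rencontres_derangements (n - k) k; rewrite subnK // => ->; rewrite natrM.
Qed.

Lemma derangementsE (m : nat) : (rencontres m 0)%:R = subfact m.
Proof.
apply/eqP; rewrite -subr_eq0; apply/eqP; move: m.
apply: binomial_transform_eq0 => n; under eq_bigr do rewrite mulrBr.
by rewrite sumrB binomial_transform_derangements binomial_transform_subfact subrr.
Qed.

Lemma subfact_rec2 (k : nat) :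
  (k.+2 * k.+1)%:R * subfact k - subfact k.+2 = (-1) ^+ k * k.+1%:R.
Proof. rewrite /= !exprS natrM; ring. Qed.

(* D_(k+2) >= (k+1)!, by induction from D_(k+3) = (k+3) D_(k+2) +- 1. *)
Lemma fact_le_subfact (k : nat) : (k.+1)`!%:R <= subfact k.+2.
Proof.
elim: k => [|k IH]; first by rewrite /= !exprS expr0 (_ : 1`!%:R = 1 :> rat) //; lra.
have sign_ge : -1 <= (-1) ^+ k.+3 :> rat.
  by rewrite -signr_odd; case: (odd _); rewrite ?expr0 ?expr1; lra.
have fact_ge1 : 1 <= (k.+1)`!%:R :> rat by rewrite ler1n fact_gt0.
have k3E : k.+3%:R = k.+2%:R + 1 :> rat by rewrite -natr1.
have mono : k.+3%:R * (k.+1)`!%:R <= k.+3%:R * subfact k.+2 by rewrite ler_wpM2l.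
rewrite {1}k3E mulrDl mul1r in mono.
have -> : subfact k.+3 = k.+3%:R * subfact k.+2 + (-1) ^+ k.+3 by [].
rewrite factS natrM; lra.
Qed.

Lemma bin_mul_falling (k x : nat) :
  ((k + x).+2 * (k + x).+1 * 'C(k + x, x) =
   'C((k + x).+2, x) * (k.+2 * k.+1))%N.
Proof.
have down1 := mul_bin_down (k + x).+1 x.
have down2 := mul_bin_down (k + x).+2 x.
rewrite (_ : (k + x).+1 - x = k.+1)%N in down1; last by lia.
rewrite (_ : (k + x).+2 - x = k.+2)%N in down2; last by lia.
rewrite -mulnA down1 mulnCA down2 mulnA; lia.
Qed.

Lemma two_p_sub1 (k x : nat) :
  2 * p (k + x).+2 x - 1 = (-1) ^+ k * k.+1%:R / subfact k.+2.
Proof.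
rewrite /p -natr_sum -/(rencontres _ x).
set S := (\sum_(s | eta1 s == x) eta2 s)%N.
set c : rat := 'C((k + x).+2, x)%:R.
have c_gt0 : 0 < c by rewrite /c ltr0n bin_gt0; lia.
have D_gt0 : 0 < subfact k.+2.
  by apply: lt_le_trans (fact_le_subfact k); rewrite ltr0n fact_gt0.
have twice_S : 2 * S%:R = c * (k.+2 * k.+1)%:R * subfact k.
  rewrite -derangementsE -!natrM /S double_sum_eta2 rencontres_derangements.
  by rewrite !mulnA bin_mul_falling !mulnA.
have rencontres_x : (rencontres (k + x).+2 x)%:R = c * subfact k.+2.
  by rewrite -derangementsE -natrM (rencontres_derangements k.+2 x).
rewrite rencontres_x mulrA twice_S -subfact_rec2; field.
by rewrite !gt_eqF.
Qed.

Theorem proposition4p1 (N x : nat) :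
  (2 <= N)%N -> (x <= N - 2)%N ->
  `|2 * p N x - 1| <= 1 / ((N - x - 2)`!)%:R.
Proof.
move=> N_ge2 x_le.
have [k ->] : exists k, N = (k + x).+2 by exists (N - x - 2)%N; lia.
rewrite (_ : ((k + x).+2 - x - 2 = k)%N); last by lia.
have kfact_gt0 : 0 < k`!%:R :> rat by rewrite ltr0n fact_gt0.
have D_ge := fact_le_subfact k; rewrite factS natrM in D_ge.
have D_gt0 : 0 < subfact k.+2 by apply: lt_le_trans D_ge; rewrite mulr_gt0.
rewrite two_p_sub1 !normrM normr_sign mul1r normfV !gtr0_norm // ?ltr0n //.
by rewrite ler_pdivrMr // mul1r mulrC ler_pdivlMr.
Qed.
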